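(* Let $\theta$ be a universal formula in the first-order language with equality over a single binary relation symbol $R$, using only the variables $x,y,z$. If $(P,Z)\models\theta[w]$ for every assignment $w:\{x,y,z\}\to P$, then $(Q,T)\models\theta[v]$ for every assignment $v:\{x,y,z\}\to Q$.
   Context: $(P,Z)$ is the ''pentagon'': $P=\{0,1,2,3,4\}$, $Z=\{(i,j): i<5,\ j\equiv i\pm1 \pmod 5\}$. $(Q,T)$ is the ''square'': $Q=\{0,1,2,3\}$, $T=\{(i,j): i<4,\ j\equiv i\pm1 \pmod 4\}$; $R$ is interpreted by $Z$, resp. $T$. A universal formula is one built from atomic formulas ($Ruv$ or $u=v$, $u,v$ variables) and negations of atomic formulas using only conjunction, disjunction and universal quantification. ''Using only the variables $x,y,z$'' means every variable occurring, free or bound, is among $x,y,z$ (variables may be requantified). *)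

From mathcomp Require Import all_boot.
Set Implicit Arguments. Unset Strict Implicit. Unset Printing Implicit Defensive.

Inductive var := vx | vy | vz.

Definition var_eqb (a b : var) : bool :=
  match a, b with vx, vx | vy, vy | vz, vz => true | _, _ => false end.

(* Universal formulas over a single binary relation symbol R, in the
   variables x, y, z: atoms and negated atoms, closed under
   conjunction, disjunction and universal quantification. *)
Inductive uform :=
  | URel  (u v : var)
  | UEq   (u v : var)
  | UNRel (u v : var)
  | UNEq  (u v : var)
  | UAnd  (f g : uform)
  | UOr   (f g : uform)
  | UAll  (u : var) (f : uform).

Definition upd (D : Type) (w : var -> D) (u : var) (d : D) : var -> D :=
  fun t => if var_eqb t u then d else w t.

Fixpoint sat (D : Type) (rel : D -> D -> Prop) (f : uform) (w : var -> D) : Prop :=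
  match f with
  | URel u v => rel (w u) (w v)
  | UEq u v => w u = w v
  | UNRel u v => ~ rel (w u) (w v)
  | UNEq u v => w u <> w v
  | UAnd f g => sat rel f w /\ sat rel g w
  | UOr f g => sat rel f w \/ sat rel g w
  | UAll u f => forall d : D, sat rel f (upd w u d)
  end.

Definition cyc_rel (n : nat) (i j : 'I_n) : Prop :=
  (j %% n = (i + 1) %% n) \/ ((j + 1) %% n = i %% n).

Definition pentZ : 'I_5 -> 'I_5 -> Prop := @cyc_rel 5.
Definition squareT : 'I_4 -> 'I_4 -> Prop := @cyc_rel 4.

From mathcomp Require Import all_boot.

(* Universal formulas are preserved "downwards" along a forth-simulation.
   Call assignments v : var -> A and w : var -> B *atomically equivalent*
   when they satisfy the same atomic formulas (equalities and R-atoms)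
   in x, y, z.  If every such pair can be extended forth -- whatever new
   value the target assignment gives to one variable, the source
   assignment can match it keeping the pair atomically equivalent --
   then, by induction on the formula, every universal formula true of w
   is true of v: atoms and negated atoms transfer by equivalence,
   conjunction and disjunction trivially, and a target witness of a
   universal quantifier is answered by the forth move.  This is the
   one-sided three-pebble game and is proved for arbitrary structures.
   For the square (target) and the pentagon (source), atomic equivalence
   and the forth property are decidable, and the latter is verified by
   exhaustive computation over all 4^3 * 5^3 pairs of assignments. *)

Section Transfer.

Context {A B : Type} (rA : A -> A -> Prop) (rB : B -> B -> Prop).

Definition same_atoms (v : var -> A) (w : var -> B) : Prop :=
  forall s t, (v s = v t <-> w s = w t) /\ (rA (v s) (v t) <-> rB (w s) (w t)).

Lemma same_atoms_eqfun (v v' : var -> A) (w : var -> B) :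
  v =1 v' -> same_atoms v w -> same_atoms v' w.
Proof. by move=> vv' vw s t; rewrite -!vv'; exact: vw. Qed.

Hypothesis forth : forall (v : var -> A) (w : var -> B) (u : var) (a : A),
  same_atoms v w -> exists b, same_atoms (upd v u a) (upd w u b).

Lemma sat_transfer (f : uform) :
  forall v w, same_atoms v w -> sat rB f w -> sat rA f v.
Proof.
elim: f => [s t|s t|s t|s t|f IHf g IHg|f IHf g IHg|u f IHf] v w vw /=.
- by case: (vw s t) => _ [_ relBA]; exact: relBA.
- by case: (vw s t) => [[_ eqBA] _]; exact: eqBA.
- by case: (vw s t) => _ [relAB _] nR /relAB.
- by case: (vw s t) => [[eqAB _] _] nE /eqAB.
- by case=> Hf Hg; split; [exact: IHf Hf|exact: IHg Hg].
- by case=> [Hf|Hg]; [left; exact: IHf Hf|right; exact: IHg Hg].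
- move=> Hall a; have [b vwb] := forth _ _ u a vw; exact: IHf vwb (Hall b).
Qed.

(* Starting from constant assignments with matching loop behaviour, three
   forth moves produce a partner for every assignment of A. *)
Lemma partner_exists (a0 : A) (b0 : B) :
  (rA a0 a0 <-> rB b0 b0) -> forall v : var -> A, exists w, same_atoms v w.
Proof.
move=> loop0 v.
have const0 : same_atoms (fun=> a0) (fun=> b0) by [].
have [b1 Hx] := forth _ _ vx (v vx) const0.
have [b2 Hy] := forth _ _ vy (v vy) Hx.
have [b3 Hz] := forth _ _ vz (v vz) Hy.
by exists (upd (upd (upd (fun=> b0) vx b1) vy b2) vz b3);
  apply: same_atoms_eqfun Hz; case.
Qed.

Theorem universal_transfer (a0 : A) (b0 : B) (f : uform) :
  (rA a0 a0 <-> rB b0 b0) ->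
  (forall w, sat rB f w) -> forall v, sat rA f v.
Proof.
move=> loop0 validB v; have [w vw] := partner_exists _ _ loop0 v.
exact: sat_transfer vw (validB w).
Qed.

End Transfer.

Definition cycb (n : nat) (i j : 'I_n) : bool :=
  (j %% n == (i + 1) %% n) || ((j + 1) %% n == i %% n).
Arguments cycb {n}.

Lemma cycP (n : nat) (i j : 'I_n) : reflect (cyc_rel i j) (cycb i j).
Proof. by apply: (iffP orP) => -[/eqP|/eqP]; [left|right|left|right]. Qed.

Definition vars : seq var := [:: vx; vy; vz].

Lemma all_varsP (p : pred var) : reflect (forall s, p s) (all p vars).
Proof. by apply: (iffP and4P) => [[? ? ? _] []|ps]. Qed.

Definition same_atomsb {m n : nat} (v : var -> 'I_m) (w : var -> 'I_n) : bool :=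
  all (fun s => all (fun t =>
    ((v s == v t) == (w s == w t)) && (cycb (v s) (v t) == cycb (w s) (w t)))
    vars) vars.

Lemma same_atomsP (m n : nat) (v : var -> 'I_m) (w : var -> 'I_n) :
  same_atoms (@cyc_rel m) (@cyc_rel n) v w <-> same_atomsb v w.
Proof.
split=> [vw | /all_varsP vw s t].
- apply/all_varsP=> s; apply/all_varsP=> t; have [Heq Hrel] := vw s t.
  apply/andP; split; apply/eqP.
  + by apply/idP/idP => /eqP/Heq/eqP.
  + by apply/idP/idP => /cycP/Hrel/cycP.
- have /all_varsP/(_ t)/andP [/eqP Heq /eqP Hrel] := vw s.
  split; split.
  + by move/eqP; rewrite Heq => /eqP.
  + by move/eqP; rewrite -Heq => /eqP.
  + by move/cycP; rewrite Hrel => /cycP.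
  + by move/cycP; rewrite -Hrel => /cycP.
Qed.

Definition ords (n : nat) : seq 'I_n.+1 :=
  [seq Ordinal (ltn_pmod i (ltn0Sn n)) | i <- iota 0 n.+1].

Lemma mem_ords (n : nat) (i : 'I_n.+1) : i \in ords n.
Proof.
apply/mapP; exists (val i); first by rewrite mem_iota ltn_ord.
by apply/val_inj; rewrite /= modn_small.
Qed.

Definition triples (n : nat) : seq ('I_n.+1 * 'I_n.+1 * 'I_n.+1) :=
  [seq (ij, k) | ij <- [seq (i, j) | i <- ords n, j <- ords n], k <- ords n].

Lemma mem_triples (n : nat) (t : 'I_n.+1 * 'I_n.+1 * 'I_n.+1) : t \in triples n.
Proof. by case: t => [[i j] k]; rewrite !allpairs_f ?mem_ords. Qed.

Definition triple {T : Type} (t : T * T * T) : var -> T :=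
  fun s => match s with vx => t.1.1 | vy => t.1.2 | vz => t.2 end.

Definition square_pentagon_forth : bool :=
  all (fun a => all (fun b =>
    same_atomsb (triple a) (triple b) ==>
    all (fun u => all (fun e => has (fun d =>
       same_atomsb (upd (triple a) u e) (upd (triple b) u d))
     (ords 4)) (ords 3)) vars)
  (triples 4)) (triples 3).

Lemma square_pentagon_forth_ok : square_pentagon_forth.
Proof. by vm_compute. Qed.

(* The pentagon answers every move in the square.  An assignment v agrees
   by computation with triple (v vx, v vy, v vz), so the table applies. *)
Lemma square_pentagon_forthP (v : var -> 'I_4) (w : var -> 'I_5) (u : var) (e : 'I_4) :
  same_atoms squareT pentZ v w -> exists d, same_atoms squareT pentZ (upd v u e) (upd w u d).
Proof.
move=> /same_atomsP vw.
have := square_pentagon_forth_ok.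
move=> /allP /(_ _ (mem_triples _ (v vx, v vy, v vz)))
  /allP /(_ _ (mem_triples _ (w vx, w vy, w vz))) /implyP /(_ vw)
  /all_varsP /(_ u) /allP /(_ e (mem_ords _ e)) /hasP [d _ vwd].
by exists d; apply/same_atomsP; case: u vwd.
Qed.

(* Both cycles are loop-free, so the constant assignments start the game. *)
Theorem lemma2 (theta : uform) :
  (forall w : var -> 'I_5, sat pentZ theta w) ->
  forall v : var -> 'I_4, sat squareT theta v.
Proof.
apply: (universal_transfer _ _ square_pentagon_forthP ord0 ord0).
by split=> /cycP.
Qed.
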